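(* Let $n\ge 6$ and let $e$ be any hyperedge of the Turán hypergraph $T(n,3,2)$. Then $\mathcal{E_S}(T(n,3,2))>\mathcal{E_S}(T(n,3,2)-e)$.
   Context: For a hypergraph $\mathcal{H}$ and distinct vertices $i,j$, the co-degree $c_{ij}$ is the number of hyperedges containing both $i$ and $j$. The Seidel matrix $\mathcal{S}(\mathcal{H})$ has zero diagonal and $(i,j)$-entry $1-2c_{ij}$ for $i\neq j$; the Seidel energy $\mathcal{E_S}(\mathcal{H})$ is the sum of the absolute values of its eigenvalues. The Turán hypergraph $T(n,3,2)$ has $n$ vertices partitioned into two parts $V_1,V_2$ whose sizes differ by at most $1$, and its hyperedges are all $3$-element vertex subsets meeting both $V_1$ and $V_2$ (i.e. it is the complete $3$-uniform bipartite hypergraph with parts of sizes $\lceil n/2\rceil,\lfloor n/2\rfloor$). For a hyperedge $e$, $\mathcal{H}-e$ denotes the hypergraph with the same vertex set and hyperedge set $E(\mathcal{H})\setminus\{e\}$. *)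

From mathcomp Require Import all_boot all_order all_algebra all_field.
Set Implicit Arguments. Unset Strict Implicit. Unset Printing Implicit Defensive.
Import Order.TTheory GRing.Theory Num.Theory.
Local Open Scope ring_scope.

Definition hypergraph (n : nat) := {set {set 'I_n}}.

Definition codegree n (H : hypergraph n) (i j : 'I_n) : nat :=
  #|[set e in H | (i \in e) && (j \in e)]|.

Definition seidel_matrix n (H : hypergraph n) : 'M[algC]_n :=
  \matrix_(i, j) (if i == j then 0 else 1 - 2 * (codegree H i j)%:R).

Definition mx_spectrum n (A : 'M[algC]_n) : seq algC :=
  sval (closed_field_poly_normal (char_poly A)).

Definition seidel_energy n (H : hypergraph n) : algC :=
  \sum_(z <- mx_spectrum (seidel_matrix H)) `|z|.

Definition turan_part1 n : {set 'I_n} := [set i : 'I_n | i < uphalf n]%N.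
Definition turan_part2 n : {set 'I_n} := ~: turan_part1 n.

Definition turan_3_2 n : hypergraph n :=
  [set e : {set 'I_n} | [&& #|e| == 3%N,
                            e :&: turan_part1 n != set0 &
                            e :&: turan_part2 n != set0]].

(* Let A and B be the Seidel matrices of T = T(n,3,2) and of T - e.  Off the
   diagonal B is negative, and B >= A entrywise, strictly on the pairs inside e.
   Up to a multiple of the all-ones matrix, B is a nonnegative combination of
   rank-one matrices u u^T plus a nonnegative diagonal matrix, so B is positive
   semidefinite on the hyperplane orthogonal to the all-ones vector.  Hence B
   has a single negative eigenvalue l and, having trace 0, energy -2l.  The
   absolute values w of an l-eigenvector still minimize the Rayleigh quotient of
   B, and a Perron-type perturbation argument shows that w is entrywise
   positive.  So the least eigenvalue m of A satisfies
   m <= w^* A w < w^* B w = l, and since tr A = 0 the energy of A is at least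
   -2m > -2l. *)

From mathcomp Require Import all_boot all_order all_algebra all_field.
From mathcomp Require Import ring zify.
Import Order.TTheory GRing.Theory Num.Theory.
Set Implicit Arguments. Unset Strict Implicit. Unset Printing Implicit Defensive.
Local Open Scope ring_scope.
Local Open Scope sesquilinear_scope.

Section QuadraticForm.
Variable n : nat.
Implicit Types (M : 'M[algC]_n) (x y z : 'rV[algC]_n).

Definition bform M x y := \sum_i \sum_j x 0 i * M i j * (y 0 j)^*.
Definition qform M x := bform M x x.
Definition sqnorm x := \sum_i `|x 0 i| ^+ 2.

Lemma qformE M x : qform M x = (x *m M *m x ^t*) 0 0.
Proof.
rewrite !mxE; under [RHS]eq_bigr do rewrite !mxE big_distrl /=.
by rewrite exchange_big.
Qed.

Lemma bformDl M x y z : bform M (x + y) z = bform M x z + bform M y z.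
Proof.
rewrite /bform -big_split; apply: eq_bigr => i _; rewrite -big_split.
by apply: eq_bigr => j _; rewrite mxE !mulrDl.
Qed.

Lemma bformDr M x y z : bform M x (y + z) = bform M x y + bform M x z.
Proof.
rewrite /bform -big_split; apply: eq_bigr => i _; rewrite -big_split.
by apply: eq_bigr => j _; rewrite mxE rmorphD /= !mulrDr.
Qed.

Lemma bformZl M a x y : bform M (a *: x) y = a * bform M x y.
Proof.
rewrite /bform mulr_sumr; apply: eq_bigr => i _; rewrite mulr_sumr.
by apply: eq_bigr => j _; rewrite mxE !mulrA.
Qed.

Lemma bformZr M a x y : bform M x (a *: y) = a^* * bform M x y.
Proof.
rewrite /bform mulr_sumr; apply: eq_bigr => i _; rewrite mulr_sumr.
by apply: eq_bigr => j _; rewrite mxE rmorphM /= mulrCA mulrA.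
Qed.

Lemma qformD M1 M2 x : qform (M1 + M2) x = qform M1 x + qform M2 x.
Proof.
rewrite /qform /bform -big_split; apply: eq_bigr => i _; rewrite -big_split.
by apply: eq_bigr => j _; rewrite !mxE mulrDr mulrDl.
Qed.

Lemma qformZ a M x : qform (a *: M) x = a * qform M x.
Proof.
rewrite /qform /bform mulr_sumr; apply: eq_bigr => i _; rewrite mulr_sumr.
by apply: eq_bigr => j _; rewrite !mxE mulrCA !mulrA.
Qed.

Lemma qformN M x : qform (- M) x = - qform M x.
Proof. by rewrite -scaleN1r qformZ mulN1r. Qed.

Lemma qformB M1 M2 x : qform (M1 - M2) x = qform M1 x - qform M2 x.
Proof. by rewrite qformD qformN. Qed.

Lemma qform_diag (d : 'rV[algC]_n) x :
  qform (diag_mx d) x = \sum_i d 0 i * `|x 0 i| ^+ 2.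
Proof.
apply: eq_bigr => i _; rewrite (bigD1 i) //= big1 => [|j ji].
  by rewrite !mxE eqxx mulr1n addr0 normCK mulrAC mulrC.
by rewrite !mxE eq_sym (negbTE ji) mulr0n mulr0 mul0r.
Qed.

Lemma sqnorm_qform x : sqnorm x = qform 1%:M x.
Proof.
rewrite -[1%:M]diag_const_mx qform_diag; apply: eq_bigr => i _.
by rewrite mxE mul1r.
Qed.

Lemma sqnorm_ge0 x : 0 <= sqnorm x.
Proof. by apply: sumr_ge0 => i _; rewrite exprn_ge0. Qed.

Lemma qform_rank1 (u : 'I_n -> algC) x : (forall i, (u i)^* = u i) ->
  qform (\matrix_(i, j) (u i * u j)) x = `|\sum_i x 0 i * u i| ^+ 2.
Proof.
move=> u_real; rewrite normCK rmorph_sum big_distrl /=; apply: eq_bigr => i _.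
rewrite big_distrr /=; apply: eq_bigr => j _.
by rewrite !mxE rmorphM /= u_real; ring.
Qed.

Lemma sum_mul_delta (F : 'I_n -> algC) i : \sum_j F j * (j == i)%:R = F i.
Proof.
rewrite (bigD1 i) //= big1 => [|j ji]; first by rewrite eqxx mulr1 addr0.
by rewrite (negbTE ji) mulr0.
Qed.

Lemma qform_add_delta M x i t :
  (forall j k, M j k = M k j) -> (forall j, (x 0 j)^* = x 0 j) -> t \is Num.real ->
  qform M (x + t *: delta_mx 0 i) =
    qform M x + (t * \sum_j M i j * x 0 j) *+ 2 + t ^+ 2 * M i i.
Proof.
move=> Msym x_real t_real.
have delta_entry j : (delta_mx 0 i : 'rV[algC]_n) 0 j = (j == i)%:R.
  by rewrite mxE eqxx.
have bform_x_delta : bform M x (delta_mx 0 i) = \sum_j M i j * x 0 j.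
  apply: eq_bigr => j _; rewrite Msym mulrC -(sum_mul_delta (fun k => x 0 j * M j k)).
  by apply: eq_bigr => k _; rewrite delta_entry conjC_nat.
have bform_delta y : bform M (delta_mx 0 i) y = \sum_j M i j * (y 0 j)^*.
  rewrite /bform -(sum_mul_delta (fun k => \sum_j M k j * (y 0 j)^*)).
  apply: eq_bigr => k _; rewrite mulr_suml; apply: eq_bigr => j _.
  by rewrite delta_entry -mulrA mulrC.
rewrite /qform bformDl !bformDr !bformZl !bformZr conj_Creal // bform_x_delta.
rewrite !bform_delta.
have -> : \sum_j M i j * (x 0 j)^* = \sum_j M i j * x 0 j.
  by apply: eq_bigr => j _; rewrite x_real.
have -> : \sum_j M i j * ((delta_mx 0 i : 'rV_n) 0 j)^* = M i i.
  rewrite -(sum_mul_delta (M i)); apply: eq_bigr => j _.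
  by rewrite delta_entry conjC_nat.
by rewrite mulr2n expr2 !addrA mulrA.
Qed.

Lemma sqnorm_add_delta x i t : x 0 i = 0 ->
  sqnorm (x + t *: delta_mx 0 i) = sqnorm x + `|t| ^+ 2.
Proof.
move=> xi0; rewrite /sqnorm (bigD1 i) // [in RHS](bigD1 i) //= xi0 normr0.
rewrite !mxE !eqxx xi0 /= mulr1 add0r expr0n add0r addrC; congr (_ + _).
by apply: eq_bigr => j ji; rewrite !mxE (negbTE ji) mulr0 addr0.
Qed.

End QuadraticForm.

Lemma qform_map_normr_le n (M : 'M[algC]_n) (x : 'rV[algC]_n) :
  (forall i j, M i j <= 0) -> qform M (map_mx Num.norm x) <= - `|qform M x|.
Proof.
move=> M_le0.
have -> : qform M (map_mx Num.norm x) = - \sum_i \sum_j `|x 0 i * M i j * (x 0 j)^*|.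
  rewrite -sumrN; apply: eq_bigr => i _; rewrite -sumrN; apply: eq_bigr => j _.
  rewrite !mxE conj_normC !normrM norm_conjC (ler0_norm (M_le0 i j)).
  by rewrite mulrN mulNr opprK.
rewrite lerN2; apply: le_trans (ler_norm_sum _ _ _) _.
by apply: ler_sum => i _; apply: ler_norm_sum.
Qed.

Lemma sqnorm_map_normr n (x : 'rV[algC]_n) :
  sqnorm (map_mx Num.norm x) = sqnorm x.
Proof. by apply: eq_bigr => i _; rewrite mxE normr_id. Qed.

Lemma sumr_le_term (R : numDomainType) (I : finType) (F : I -> R) i0 :
  (forall i, F i <= 0) -> \sum_i F i <= F i0.
Proof.
move=> F_le0; rewrite (bigD1 i0) //= -[leRHS]addr0 lerD2l.
by apply: sumr_le0 => i _; exact: F_le0.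
Qed.

Lemma sumr_ge_term (R : numDomainType) (I : finType) (F : I -> R) i0 :
  (forall i, 0 <= F i) -> F i0 <= \sum_i F i.
Proof.
move=> F_ge0; rewrite (bigD1 i0) //= -[leLHS]addr0 lerD2l.
by apply: sumr_ge0 => i _; exact: F_ge0.
Qed.

Lemma qform_gt0 n (M : 'M[algC]_n) (x : 'rV[algC]_n) i0 j0 :
  (forall i, 0 < x 0 i) -> (forall i j, 0 <= M i j) -> 0 < M i0 j0 ->
  0 < qform M x.
Proof.
move=> x_gt0 M_ge0 M_gt0.
have term_ge0 i j : 0 <= x 0 i * M i j * (x 0 j)^*.
  rewrite conj_Creal ?gtr0_real //.
  exact: mulr_ge0 (mulr_ge0 (ltW (x_gt0 i)) (M_ge0 i j)) (ltW (x_gt0 j)).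
apply: (lt_le_trans _ (sumr_ge_term i0 _)) => [|i]; last exact: sumr_ge0.
apply: (lt_le_trans _ (sumr_ge_term j0 _)) => // .
by rewrite conj_Creal ?gtr0_real // !mulr_gt0.
Qed.

Lemma real_arg_min (R : numDomainType) (I : finType) (f : I -> R) (i0 : I) :
  (forall i, f i \is Num.real) -> exists k, forall i, f k <= f i.
Proof.
move=> f_real.
suff [k Hk] : exists k, forall i, i \in enum I -> f k <= f i.
  by exists k => i; apply: Hk; rewrite mem_enum.
elim: (enum I) => [|a s [k Hk]]; first by exists i0.
have /orP[le|le] := real_leVge (f_real a) (f_real k).
  by exists a => i; rewrite inE => /orP[/eqP->//|/Hk]; exact: le_trans.
by exists k => i; rewrite inE => /orP[/eqP->//|/Hk].
Qed.

Lemma sym_real_hermitian n (M : 'M[algC]_n) :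
  (forall i j, M i j = M j i) -> (forall i j, M i j \is Num.real) ->
  M \is hermsymmx.
Proof.
move=> M_sym M_real; apply/is_hermitianmxP; rewrite expr0 scale1r.
by apply/matrixP => i j; rewrite !mxE M_sym conj_Creal.
Qed.

Definition mx_energy n (M : 'M[algC]_n) := \sum_(z <- mx_spectrum M) `|z|.

Lemma seidel_energyE n (H : hypergraph n) :
  seidel_energy H = mx_energy (seidel_matrix H).
Proof. by []. Qed.

Lemma char_poly_similar n (Q D R : 'M[algC]_n) : R *m Q = 1%:M ->
  char_poly (Q *m D *m R) = char_poly D.
Proof.
move=> RQ; have QR := mulmx1C RQ.
have conj_char_poly_mx : char_poly_mx (Q *m D *m R) =
   map_mx polyC Q *m char_poly_mx D *m map_mx polyC R.
  rewrite /char_poly_mx mulmxBr mulmxBl !map_mxM; congr (_ - _).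
  by rewrite scalar_mxC -mulmxA -map_mxM QR map_mx1 mulmx1.
rewrite /char_poly conj_char_poly_mx !det_mulmx !det_map_mx mulrC mulrA -rmorphM.
by rewrite -det_mulmx RQ det1 rmorph1 mul1r.
Qed.

Lemma mx_spectrum_similar_diag n (M Q R : 'M[algC]_n) (d : 'rV[algC]_n) :
  R *m Q = 1%:M -> M = Q *m diag_mx d *m R ->
  perm_eq (mx_spectrum M) [seq d 0 i | i <- enum 'I_n].
Proof.
move=> RQ ->; apply: prod_XsubC_eq; rewrite /mx_spectrum.
case: closed_field_poly_normal => r /= Er.
rewrite (monicP (char_poly_monic _)) scale1r in Er.
rewrite -Er char_poly_similar // char_poly_trig ?diag_mx_is_trig //.
by rewrite big_map big_enum /=; apply: eq_bigr => i _; rewrite mxE eqxx mulr1n.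
Qed.

Section Spectral.
Variables (n : nat) (M : 'M[algC]_n).
Hypothesis M_herm : M \is hermsymmx.
Local Notation P := (spectralmx M).
Local Notation d := (spectral_diag M).

Lemma spectral_decomposition : M = P ^t* *m diag_mx d *m P.
Proof.
have /orthomx_spectralP := hermitian_normalmx M_herm.
by rewrite invmx_unitary // spectral_unitarymx.
Qed.

Lemma spectral_mulmx_tC : P *m P ^t* = 1%:M.
Proof. exact/unitarymxP/spectral_unitarymx. Qed.

Lemma spectral_tC_mulmx : P ^t* *m P = 1%:M.
Proof. exact: mulmx1C spectral_mulmx_tC. Qed.

Lemma spectral_diag_real k : d 0 k \is Num.real.
Proof. by have /mxOverP := hermitian_spectral_diag_real M_herm; apply. Qed.

Lemma exists_spectral_min (i0 : 'I_n) : exists k, forall i, d 0 k <= d 0 i.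
Proof. exact: real_arg_min i0 spectral_diag_real. Qed.

Lemma sum_spectral_diag : \sum_k d 0 k = \tr M.
Proof.
rewrite [in RHS]spectral_decomposition mxtrace_mulC mulmxA spectral_mulmx_tC.
by rewrite mul1mx /mxtrace; apply: eq_bigr => i _; rewrite mxE eqxx mulr1n.
Qed.

Lemma mx_energy_spectral : mx_energy M = \sum_k `|d 0 k|.
Proof.
have spec := mx_spectrum_similar_diag spectral_mulmx_tC spectral_decomposition.
by rewrite /mx_energy (perm_big _ spec) big_map big_enum.
Qed.

Lemma qform_spectral x : qform M x = \sum_k d 0 k * `|(x *m P ^t*) 0 k| ^+ 2.
Proof.
rewrite qformE {1}spectral_decomposition -qform_diag qformE; congr (_ 0 0).
by rewrite trmx_mul map_mxM trmxCK !mulmxA.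
Qed.

Lemma sqnorm_mulmx_spectral x : sqnorm (x *m P ^t*) = sqnorm x.
Proof.
rewrite !sqnorm_qform !qformE trmx_mul map_mxM trmxCK; congr (_ 0 0).
by rewrite !mulmx1 mulmxA -(mulmxA x) spectral_tC_mulmx mulmx1.
Qed.

Lemma row_spectral_mulmx k : row k P *m P ^t* = delta_mx 0 k.
Proof. by rewrite -row_mul spectral_mulmx_tC row1. Qed.

Lemma qform_ge_spectral_min k : (forall i, d 0 k <= d 0 i) ->
  forall x, d 0 k * sqnorm x <= qform M x.
Proof.
move=> k_min x; rewrite qform_spectral -sqnorm_mulmx_spectral /sqnorm mulr_sumr.
by apply: ler_sum => i _; apply: ler_wpM2r; rewrite ?exprn_ge0.
Qed.

Lemma qform_spectral_row2 j k a b : j != k ->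
  qform M (a *: row j P + b *: row k P) = d 0 j * `|a| ^+ 2 + d 0 k * `|b| ^+ 2.
Proof.
move=> jk; rewrite qform_spectral mulmxDl -!scalemxAl !row_spectral_mulmx.
rewrite (bigD1 j) // (bigD1 k) 1?eq_sym //= big1 => [|i /andP[ij ik]].
  by rewrite !mxE !eqxx (negbTE jk) eq_sym (negbTE jk) !mulr0 !mulr1 addr0 add0r addr0.
by rewrite !mxE (negbTE ij) (negbTE ik) !mulr0 addr0 normr0 expr0n mulr0.
Qed.

Lemma qform_spectral_row k : qform M (row k P) = d 0 k.
Proof.
rewrite qform_spectral row_spectral_mulmx (bigD1 k) //= big1 => [|j jk].
  by rewrite !mxE !eqxx normr1 expr1n mulr1 addr0.
by rewrite !mxE (negbTE jk) andbF normr0 expr0n mulr0.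
Qed.

Lemma sqnorm_spectral_row k : sqnorm (row k P) = 1.
Proof.
rewrite -sqnorm_mulmx_spectral row_spectral_mulmx /sqnorm (bigD1 k) //= big1.
  by rewrite !mxE !eqxx normr1 expr1n addr0.
by move=> j jk; rewrite !mxE (negbTE jk) andbF normr0 expr0n.
Qed.

Lemma sum_spectral_diag_neq k : \tr M = 0 ->
  \sum_(i < n | i != k) d 0 i = - d 0 k.
Proof.
move=> trM; have := sum_spectral_diag; rewrite trM (bigD1 k) //=.
by move=> sum0; apply/eqP; rewrite -addr_eq0 addrC sum0.
Qed.

Lemma mx_energy_ge_spectral k : \tr M = 0 -> - (d 0 k *+ 2) <= mx_energy M.
Proof.
move=> trM; rewrite mx_energy_spectral (bigD1 k) //= mulr2n opprD.
apply: lerD; first by rewrite -normrN real_ler_norm // realN spectral_diag_real.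
apply: le_trans (ler_norm_sum _ _ _); rewrite sum_spectral_diag_neq //.
by rewrite real_ler_norm // realN spectral_diag_real.
Qed.

Lemma mx_energy_one_negative k : \tr M = 0 -> d 0 k <= 0 ->
  (forall j, j != k -> 0 <= d 0 j) -> mx_energy M = - (d 0 k *+ 2).
Proof.
move=> trM dk_le0 others_ge0; rewrite mx_energy_spectral (bigD1 k) //= ler0_norm //.
rewrite (eq_bigr (fun i => d 0 i)) => [|i ik]; last by rewrite ger0_norm ?others_ge0.
by rewrite sum_spectral_diag_neq // mulr2n opprD.
Qed.

(* Two negative eigenvalues would span a plane on which the form is negative
   definite, and that plane meets the zero-sum hyperplane. *)
Lemma spectral_diag_ge0_of_psd (j k : 'I_n) :
  (forall x : 'rV_n, \sum_i x 0 i = 0 -> 0 <= qform M x) -> j != k -> d 0 j < 0 ->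
  0 <= d 0 k.
Proof.
move=> psd jk dj_lt0.
rewrite real_leNgt ?real0 ?spectral_diag_real //; apply/negP => dk_lt0.
pose s (r : 'rV[algC]_n) := \sum_i r 0 i.
have [sk0|sk_neq0] := eqVneq (s (row k P)) 0.
  by move: (psd _ sk0); rewrite qform_spectral_row => /le_gtF; rewrite dk_lt0.
pose x := s (row k P) *: row j P + (- s (row j P)) *: row k P.
have x_sum0 : s x = 0.
  rewrite /s (eq_bigr (fun i => s (row k P) * row j P 0 i - s (row j P) * row k P 0 i)).
    by rewrite sumrB -!mulr_sumr mulrC subrr.
  by move=> i _; rewrite !mxE mulNr.
have /le_gtF := psd _ x_sum0; rewrite qform_spectral_row2 // => /negbT/negP; apply.
rewrite -[ltRHS](addr0 0); apply: ltr_leD.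
  by rewrite pmulr_llt0 // exprn_gt0 // normr_gt0.
by rewrite mulr_le0_ge0 ?exprn_ge0 // ltW.
Qed.

End Spectral.

Section EnergyComparison.
Variables (n : nat) (A B : 'M[algC]_n) (i0 j0 : 'I_n).
Hypothesis B_sym : forall i j, B i j = B j i.
Hypothesis B_diag : forall i, B i i = 0.
Hypothesis B_offdiag : forall i j, i != j -> B i j < 0.
Hypothesis B_psd : forall x : 'rV_n, \sum_i x 0 i = 0 -> 0 <= qform B x.
Hypothesis A_sym : forall i j, A i j = A j i.
Hypothesis A_tr : \tr A = 0.
Hypothesis A_le : forall i j, A i j <= B i j.
Hypothesis i0_neq_j0 : i0 != j0.
Hypothesis A_lt : A i0 j0 < B i0 j0.

Local Notation PB := (spectralmx B).
Local Notation dB := (spectral_diag B).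

Let B_le0 i j : B i j <= 0.
Proof. by have [->|/B_offdiag/ltW//] := eqVneq i j; rewrite B_diag. Qed.

Let B_real i j : B i j \is Num.real.
Proof. exact: ler0_real (B_le0 i j). Qed.

Let B_herm : B \is hermsymmx.
Proof. exact: sym_real_hermitian B_sym B_real. Qed.

Let A_herm : A \is hermsymmx.
Proof.
apply: (sym_real_hermitian A_sym) => i j.
by rewrite (ler_real (A_le i j)) B_real.
Qed.

Lemma qform_abs_spectral_row k :
  qform B (map_mx Num.norm (row k PB)) <= dB 0 k.
Proof.
apply: le_trans (qform_map_normr_le _ B_le0) _.
rewrite (qform_spectral_row B_herm).
exact: real_lerNnormlW (spectral_diag_real B_herm k) (lexx _).
Qed.

Section MinEigenvalue.
Variable k : 'I_n.
Hypothesis k_min : forall i, dB 0 k <= dB 0 i.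

Lemma spectral_min_lt0 : dB 0 k < 0.
Proof.
have qform1_lt0 : qform B (const_mx 1) < 0.
  apply: (le_lt_trans _ (B_offdiag i0_neq_j0)).
  apply: (le_trans (sumr_le_term i0 _)) => [i|].
    by apply: sumr_le0 => j _; rewrite !mxE conjC1 mulr1 mul1r B_le0.
  apply: (le_trans (sumr_le_term j0 _)) => [j|]; by rewrite !mxE conjC1 mulr1 mul1r.
have prod_lt0 := le_lt_trans (qform_ge_spectral_min B_herm k_min _) qform1_lt0.
rewrite real_ltNge ?real0 ?(spectral_diag_real B_herm) //; apply/negP => dk_ge0.
by move: prod_lt0; rewrite le_gtF // mulr_ge0 // sqnorm_ge0.
Qed.

(* A minimizer of the Rayleigh quotient of B with a zero entry at i could be
   perturbed at i to push the quotient below the least eigenvalue. *)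
Lemma rayleigh_min_gt0 (x : 'rV_n) : (forall i, 0 <= x 0 i) -> sqnorm x = 1 ->
  qform B x <= dB 0 k -> forall i, 0 < x 0 i.
Proof.
move=> x_ge0 x_unit x_min i; rewrite lt_def x_ge0 andbT; apply/eqP => xi0.
have [j xj_neq0] : exists j, x 0 j != 0.
  apply/existsP; apply: contraT; rewrite negb_exists => /forallP x_eq0.
  move: x_unit; rewrite /sqnorm big1 => [/eqP|j _]; first by rewrite eq_sym oner_eq0.
  by move/negPn/eqP: (x_eq0 j) ->; rewrite normr0 expr0n.
have ji : j != i by apply: contraNneq xj_neq0 => ->; rewrite xi0.
pose s := \sum_m B i m * x 0 m.
have s_lt0 : s < 0.
  apply: (le_lt_trans (sumr_le_term j _)) => [m|].
    by rewrite mulr_le0_ge0 ?B_le0.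
  by rewrite pmulr_llt0 ?B_offdiag 1?eq_sym // lt_def xj_neq0 x_ge0.
have dk_lt0 := spectral_min_lt0.
pose t := s / dB 0 k.
have t_gt0 : 0 < t by rewrite /t -mulrNN -invrN divr_gt0 // oppr_gt0.
have dk_t : dB 0 k * t = s by rewrite /t mulrCA divff ?mulr1 // lt_eqF.
have x_real m : (x 0 m)^* = x 0 m by rewrite conj_Creal // ger0_real.
have := qform_ge_spectral_min B_herm k_min (x + t *: delta_mx 0 i).
rewrite qform_add_delta ?gtr0_real // sqnorm_add_delta // x_unit.
rewrite real_normK ?gtr0_real // B_diag mulr0 addr0 mulrDr mulr1 expr2 mulrA.
rewrite dk_t mulrC => rayleigh.
have : dB 0 k + t * s <= dB 0 k + (t * s) *+ 2.
  by apply: le_trans rayleigh _; rewrite lerD2r.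
by rewrite mulr2n addrA lerDl => /le_gtF; rewrite pmulr_rlt0 // s_lt0.
Qed.

End MinEigenvalue.

Theorem mx_energy_lt : mx_energy B < mx_energy A.
Proof.
have [k k_min] := exists_spectral_min B_herm i0.
have [kA kA_min] := exists_spectral_min A_herm i0.
pose w : 'rV_n := map_mx Num.norm (row k PB).
have w_gt0 : forall i, 0 < w 0 i.
  apply: (rayleigh_min_gt0 k_min) => [i||]; last exact: qform_abs_spectral_row.
    by rewrite mxE normr_ge0.
  by rewrite sqnorm_map_normr sqnorm_spectral_row.
have dk_lt0 := spectral_min_lt0 k_min.
have B_tr : \tr B = 0 by rewrite /mxtrace big1.
have -> : mx_energy B = - (dB 0 k *+ 2).
  apply: (mx_energy_one_negative B_herm B_tr (ltW dk_lt0)) => j jk.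
  by apply: (spectral_diag_ge0_of_psd B_herm B_psd _ dk_lt0); rewrite eq_sym.
apply: lt_le_trans (mx_energy_ge_spectral A_herm kA A_tr); rewrite ltrN2 ltrMn2r /=.
have BA_gt0 : 0 < qform (B - A) w.
  apply: (qform_gt0 (i0 := i0) (j0 := j0) w_gt0) => [i j|].
    by rewrite !mxE subr_ge0.
  by rewrite !mxE subr_gt0.
have := qform_ge_spectral_min A_herm kA_min w.
rewrite sqnorm_map_normr sqnorm_spectral_row mulr1 => /le_lt_trans; apply.
rewrite -[qform A w](subKr (qform B w)) -qformB.
apply: (lt_le_trans _ (qform_abs_spectral_row k)).
by rewrite ltrBlDr ltrDl.
Qed.

End EnergyComparison.

Section Hypergraph.
Variable n : nat.
Implicit Types (H : hypergraph n) (f : {set 'I_n}) (i j k : 'I_n).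

Lemma codegreeC H i j : codegree H i j = codegree H j i.
Proof. by apply: eq_card => f; rewrite !inE (andbC (i \in f)). Qed.

Lemma codegree_setD1 H f i j : f \in H ->
  (codegree (H :\ f) i j + ((i \in f) && (j \in f)))%N = codegree H i j.
Proof.
move=> fH; rewrite /codegree [in RHS](cardsD1 f) inE fH addnC /=.
by congr (_ + _)%N; apply: eq_card => g; rewrite !inE -!andbA.
Qed.

Lemma seidel_matrixC H i j : seidel_matrix H i j = seidel_matrix H j i.
Proof. by rewrite !mxE eq_sym codegreeC. Qed.

Lemma seidel_matrix_diag H i : seidel_matrix H i i = 0.
Proof. by rewrite mxE eqxx. Qed.

Lemma seidel_matrix_setD1 H f i j : f \in H -> i != j ->
  seidel_matrix (H :\ f) i j =
    seidel_matrix H i j + 2 * ((i \in f) && (j \in f))%:R.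
Proof.
move=> fH ij; rewrite !mxE (negbTE ij) -(codegree_setD1 i j fH) natrD.
by rewrite mulrDr opprD addrA subrK.
Qed.

Lemma card_set3 i j k : i != j -> k \notin [set i; j] -> #|[set i; j; k]| = 3.
Proof.
move=> ij kij; rewrite [[set i; j; k]]setUC cardsU1 cards2 ij.
by rewrite in_set2 in kij; rewrite !inE kij.
Qed.

Lemma codegree_uniform3 H i j : {in H, forall f, #|f| = 3} -> i != j ->
  codegree H i j = #|[set k | (k \notin [set i; j]) && ([set i; j; k] \in H)]|.
Proof.
move=> H3 ij; rewrite /codegree.
set K := [set k | (k \notin [set i; j]) && _].
have -> : [set f in H | (i \in f) && (j \in f)] = [set [set i; j; k] | k in K].
  apply/setP => f; rewrite inE; apply/andP/imsetP => [[fH /andP[fi fj]]|[k + ->]].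
    have ji : j \in f :\ i by rewrite !inE eq_sym ij.
    have /cards1P[k fk] : #|f :\ i :\ j| == 1%N.
      by have := H3 f fH; rewrite (cardsD1 i) fi (cardsD1 j) ji => /eqP.
    have : k \in f :\ i :\ j by rewrite fk set11.
    rewrite !inE => /and3P[kj ki _].
    have f_eq : f = [set i; j; k].
      apply/setP => x; rewrite !inE; have /setP/(_ x) := fk; rewrite !inE.
      case: (eqVneq x i) => [-> _|_]; first by rewrite fi.
      case: (eqVneq x j) => [-> _|_]; first by rewrite fj orbT.
      by rewrite /= => ->.
    by exists k => //; rewrite inE -f_eq fH !inE negb_or ki kj.
  rewrite inE => /andP[_ kH]; split=> //.
  by rewrite !inE !eqxx orbT.
rewrite card_in_imset // => k1 k2; rewrite !inE => /andP[k1n _] /andP[k2n _] E.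
have : k1 \in [set i; j; k2] by rewrite -E !inE eqxx orbT.
by rewrite !inE -orbA => /or3P[]/eqP // k1E; rewrite k1E eqxx ?orbT in k1n.
Qed.

End Hypergraph.

Section BipartiteTriples.
Variable n : nat.
Implicit Types (V : {set 'I_n}) (i j k : 'I_n).

Definition bip_triples V : hypergraph n :=
  [set f : {set 'I_n} | [&& #|f| == 3, f :&: V != set0 & f :&: ~: V != set0]].

Lemma bip_triplesC V : bip_triples (~: V) = bip_triples V.
Proof. by apply/setP => f; rewrite !inE setCK (andbC (f :&: ~: V != set0)). Qed.

Lemma set3_meet i j k V :
  ([set i; j; k] :&: V != set0) = [|| i \in V, j \in V | k \in V].
Proof.
apply/set0Pn/idP => [[x /setIP[x_ijk xV]]|].
  by move: x_ijk; rewrite !inE -orbA => /or3P[]/eqP x_eq; rewrite -x_eq xV ?orbT.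
by case/or3P => yV; [exists i|exists j|exists k]; rewrite !inE ?eqxx ?orbT yV.
Qed.

Lemma codegree_bip_triples V i j : i != j ->
  codegree (bip_triples V) i j =
    #|[set k | [&& k \notin [set i; j], [|| i \in V, j \in V | k \in V]
                 & [|| i \notin V, j \notin V | k \notin V]]]|.
Proof.
move=> ij; rewrite codegree_uniform3 // => [|f]; last by rewrite inE => /and3P[/eqP].
apply: eq_card => k; rewrite !inE -in_set2.
case: (boolP (k \in [set i; j])) => //= kij.
by rewrite card_set3 // !set3_meet !inE.
Qed.

Lemma codegree_bip_triples_in V i j : i != j -> i \in V -> j \in V ->
  codegree (bip_triples V) i j = #|~: V|.
Proof.
move=> ij iV jV; rewrite codegree_bip_triples //; apply: eq_card => k.
rewrite !inE iV jV /=; case: (boolP (k \in V)) => kV; rewrite ?andbF ?andbT //.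
by rewrite negb_or; apply/andP; split; apply: contraNneq kV => ->.
Qed.

Lemma codegree_bip_triples_out V i j : i != j -> i \notin V -> j \notin V ->
  codegree (bip_triples V) i j = #|V|.
Proof.
move=> ij iV jV.
by rewrite -bip_triplesC codegree_bip_triples_in ?setCK ?inE.
Qed.

Lemma codegree_bip_triples_cross V i j : i \in V -> j \notin V ->
  codegree (bip_triples V) i j = (n - 2)%N.
Proof.
move=> iV jV; have ij : i != j by apply: contraNneq jV => <-.
rewrite codegree_bip_triples //.
transitivity #|~: [set i; j]|.
  by apply: eq_card => k; rewrite !inE iV jV /= andbT.
by have := cardsC [set i; j]; rewrite card_ord cards2 ij; lia.
Qed.

End BipartiteTriples.

Section SeidelBipartite.
Variables (n : nat) (V f : {set 'I_n}).
Hypothesis V_gt1 : (1 < #|V|)%N.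
Hypothesis Vc_gt1 : (1 < #|~: V|)%N.
Hypothesis f_in : f \in bip_triples V.

Local Notation T := (bip_triples V).
Local Notation a := #|V|.
Local Notation b := #|~: V|.
Let ind (S : {set 'I_n}) (i : 'I_n) : algC := (i \in S)%:R.
Let rank1 (u : 'I_n -> algC) : 'M[algC]_n := \matrix_(i, j) (u i * u j).

Lemma card_bip_parts : (a + b)%N = n.
Proof. by rewrite cardsC card_ord. Qed.

Lemma natr_card_bip_parts : n%:R = a%:R + b%:R :> algC.
Proof. by rewrite -natrD card_bip_parts. Qed.

Lemma codegree_bip_triples_ge2 i j : i != j -> (2 <= codegree T i j)%N.
Proof.
move=> ij; have := card_bip_parts.
case: (boolP (i \in V)) => iV; case: (boolP (j \in V)) => jV.
- by rewrite codegree_bip_triples_in.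
- by rewrite codegree_bip_triples_cross //; lia.
- by rewrite codegreeC codegree_bip_triples_cross //; lia.
- by rewrite codegree_bip_triples_out.
Qed.

(* Within a part the codegree in T is the size of the other part, i.e.
   n - 2 - (size of the own part - 2); across the parts it is n - 2.  Removing
   f lowers it by one on the pairs inside f. *)
Let seidel_entry i j : algC :=
  5 - 2 * n%:R + 2 * (a%:R - 2) * (ind V i * ind V j)
  + 2 * (b%:R - 2) * (ind (~: V) i * ind (~: V) j) + 2 * (ind f i * ind f j).

Lemma seidel_bip_setD1_offdiag i j : i != j ->
  seidel_matrix (T :\ f) i j = seidel_entry i j.
Proof.
move=> ij; rewrite seidel_matrix_setD1 // mxE (negbTE ij) /seidel_entry /ind.
rewrite -mulnb natrM natr_card_bip_parts !inE.
have n_ge2 : (2 <= n)%N by have := card_bip_parts; lia.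
case: (boolP (i \in V)) => iV; case: (boolP (j \in V)) => jV /=.
- by rewrite codegree_bip_triples_in //; ring.
- by rewrite codegree_bip_triples_cross // natrB // natr_card_bip_parts; ring.
- by rewrite codegreeC codegree_bip_triples_cross // natrB // natr_card_bip_parts; ring.
- by rewrite codegree_bip_triples_out //; ring.
Qed.

Lemma seidel_bip_setD1_decomp : seidel_matrix (T :\ f) =
  (5 - 2 * n%:R) *: rank1 (fun=> 1) + (2 * (a%:R - 2)) *: rank1 (ind V)
  + (2 * (b%:R - 2)) *: rank1 (ind (~: V)) + 2 *: rank1 (ind f)
  - diag_mx (\row_i seidel_entry i i).
Proof.
apply/matrixP => i j; case: (eqVneq i j) => [<-|ij].
  by rewrite seidel_matrix_diag !mxE eqxx mulr1n /seidel_entry; ring.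
by rewrite seidel_bip_setD1_offdiag // !mxE (negbTE ij) mulr0n /seidel_entry; ring.
Qed.

Lemma seidel_entry_diag_le0 i : seidel_entry i i <= 0.
Proof.
have -> : seidel_entry i i =
    (1 + 2 * (i \in f))%:R - (2 * (if i \in V then b else a))%:R.
  rewrite /seidel_entry /ind natr_card_bip_parts !inE.
  by case: (i \in V); case: (i \in f); rewrite /= ?natrD ?natrM; ring.
have := V_gt1; have := Vc_gt1.
by rewrite subr_le0 ler_nat; case: (i \in V); case: (i \in f) => /=; lia.
Qed.

Lemma qform_seidel_bip_setD1_ge0 (x : 'rV_n) :
  \sum_i x 0 i = 0 -> 0 <= qform (seidel_matrix (T :\ f)) x.
Proof.
move=> x_sum0; rewrite seidel_bip_setD1_decomp qformB !qformD !qformZ qform_diag.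
rewrite !qform_rank1 => [|i|i|i|i]; rewrite ?conjC1 ?conjC_nat //.
have -> : \sum_i x 0 i * 1 = 0.
  by rewrite -[RHS]x_sum0; apply: eq_bigr => i _; rewrite mulr1.
rewrite normr0 expr0n mulr0 add0r; apply: addr_ge0.
  have card_ge2 (S : {set 'I_n}) : (1 < #|S|)%N -> 0 <= 2 * (#|S|%:R - 2) :> algC.
    by move=> S_gt1; rewrite mulr_ge0 // subr_ge0 (ler_nat _ 2).
  by rewrite !addr_ge0 // mulr_ge0 ?card_ge2 ?exprn_ge0.
rewrite oppr_ge0; apply: sumr_le0 => i _.
by rewrite mxE mulr_le0_ge0 ?seidel_entry_diag_le0 ?exprn_ge0.
Qed.

Theorem seidel_energy_bip_triples_setD1_lt :
  seidel_energy (T :\ f) < seidel_energy T.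
Proof.
have : (1 < #|f|)%N by move: f_in; rewrite inE => /and3P[/eqP-> _ _].
case/card_gt1P => i0 [j0 [i0f j0f i0j0]].
rewrite !seidel_energyE; apply: (mx_energy_lt (i0 := i0) (j0 := j0)) => //.
- exact: seidel_matrixC.
- exact: seidel_matrix_diag.
- move=> i j ij; rewrite mxE (negbTE ij) subr_lt0 -natrM (ltr_nat _ 1).
  have := codegree_setD1 i j f_in; have := codegree_bip_triples_ge2 ij.
  by case: (_ && _) => /=; lia.
- exact: qform_seidel_bip_setD1_ge0.
- exact: seidel_matrixC.
- by rewrite /mxtrace big1 // => i _; rewrite seidel_matrix_diag.
- move=> i j; case: (eqVneq i j) => [->|ij]; first by rewrite !seidel_matrix_diag.
  by rewrite seidel_matrix_setD1 // lerDl mulr_ge0 ?ler0n.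
- by rewrite seidel_matrix_setD1 // i0f j0f ltrDl mulr_gt0 ?ltr0n.
Qed.

End SeidelBipartite.

Lemma turan_3_2E n : turan_3_2 n = bip_triples (turan_part1 n).
Proof. by []. Qed.

Lemma turan_part1_card_gt1 n : (4 <= n)%N -> (1 < #|turan_part1 n|)%N.
Proof.
move=> n_ge4; apply/card_gt1P.
have lt0 : (0 < n)%N by lia.
have lt1 : (1 < n)%N by lia.
exists (Ordinal lt0), (Ordinal lt1); rewrite !inE -val_eqE /= uphalf_half.
by have := odd_double_half n; rewrite -!muln2; split => //; lia.
Qed.

Lemma turan_part2_card_gt1 n : (4 <= n)%N -> (1 < #|turan_part2 n|)%N.
Proof.
move=> n_ge4; apply/card_gt1P.
have lt1 : (n.-1 < n)%N by lia.
have lt2 : (n.-2 < n)%N by lia.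
exists (Ordinal lt1), (Ordinal lt2); rewrite !inE -val_eqE /= -!leqNgt uphalf_half.
by have := odd_double_half n; rewrite -!muln2; split; lia.
Qed.

Theorem corollary2p14 (n : nat) (hn : (6 <= n)%N) (e : {set 'I_n})
    (he : e \in turan_3_2 n) :
  seidel_energy (turan_3_2 n :\ e) < seidel_energy (turan_3_2 n).
Proof.
rewrite turan_3_2E in he *; apply: seidel_energy_bip_triples_setD1_lt he.
  by apply: turan_part1_card_gt1; lia.
by apply: turan_part2_card_gt1; lia.
Qed.
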